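(* Consider a diffeomorphism geometric wavelet transform (DGWT) as in the context and let $m\in\{2,\ldots,M\}$. Then for every $(y_m,g_m)\in Y_m\times N_m$ and every $g_m'\in N_m$, $$|\det J(y_m,g_m'^{-1}g_m)|=|\det D_m(g_m')|\,|\det J(y_m,g_m)|,$$ where $J$ is the Jacobian of $C_m$.
   Context: Physical quantities are the groups $(\mathbb{R},+)$, $(e^{i\mathbb{R}},\cdot)$, $(\mathbb{Z},+)$, $(e^{2\pi i\mathbb{Z}/n},\cdot)$. Let $M\ge 2$; for $m=2,\ldots,M$ let $N_m=G_m^1\times\cdots\times G_m^{K_m}$ be a direct product of copies of one physical quantity, with elements $g_m$ and operation $\bullet$. $H_1$ is the nested semidirect product $H_{M-1}=N_M$, $H_{m}=N_{m+1}\rtimes H_{m+1}$, elements $h_m=(g_{m+1},\ldots,g_M)$, product $(g_m,h_m)(g_m',h_m')=(g_m\bullet A_m(h_m)g_m',h_mh_m')$ with $A_m$ a smooth action by automorphisms. $D:H_1\to GL(\mathbb{R}^N)$ is a representation, $D_m=D|_{N_m}$, $D(h_1)=D_2(g_2)\cdots D_M(g_M)$. $G=\mathbb{R}^N\rtimes H_1$ with $(x,h_1)(x',h_1')=(x+D(h_1)x',h_1h_1')$, $A_1(h_1)=D(h_1)$. Frequencies are row vectors; $U=\omega_0D(H_1)$ is open dense for some $\omega_0$. The representation $\hat\pi(g)\hat f(\omega)=|\det D(h_1)|^{1/2}e^{i\omega\cdot g_1}\hat f(\omega D(h_1))$ on $L^2(U)$ (frequency form of $\pi(g)f(x)=|\det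 D(h_1)^{-1}|^{1/2}f(D(h_1)^{-1}(x-g_1))$) is assumed square integrable, and the resulting wavelet transform is assumed simply dilated: for each $m$ there is a $quantity_m$ transform, i.e. a bounded linear $\Psi_m:L^2(U)\to L^2(Y_m\times N_m)$ with $\Psi_m\pi_m(g_m')\Psi_m^*=L_m(g_m')$ ($[L_mF](y,g_m)=F(y,g_m'^{-1}g_m)$, $\pi_m$ the restriction of $\hat\pi$ to $N_m$) and $\rho^m(g')^*\breve{\mathbf Q}_m\rho^m(g')=g_m'\bullet A_m(h_m')\breve{\mathbf Q}_m$ with $\rho^m=\Psi_m\hat\pi\Psi_m^*$ and $\breve{\mathbf Q}_m$ the tuple of multiplications by $g_m^k$; and $A_m=I$ when $G_m^1$ is $e^{i\mathbb{R}}$ or $e^{2\pi i\mathbb{Z}/n}$. DGWT: for each $m=2,\ldots,M$, with $Y_m=\prod_{j\ne 1,m}N_j$, $y_m=(g_j)_{j\ne1,m}$, $D^m(y_m)=\prod_{j\neq 1,m}D_j(g_j)$ (in increasing order of $j$), there is $\omega_m$ with $C_m(y_m,g_m)=\omega_mD^m(y_m)D_m(g_m^{-1})$ a diffeomorphism $Y_m\times N_m\to U$; $J(y_m,g_m)$ denotes the Jacobian of $C_m$ with respect to the product of the standard Riemannian structures. *)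

From HB Require Import structures.
From mathcomp Require Import all_boot all_order all_algebra.
From mathcomp Require Import all_classical all_reals all_analysis.
From mathcomp Require Import ring lra.
Set Implicit Arguments. Unset Strict Implicit. Unset Printing Implicit Defensive.
Import Order.TTheory GRing.Theory Num.Theory.
Import numFieldNormedType.Exports.
Local Open Scope classical_set_scope.
Local Open Scope ring_scope.

Section Circle.
Variable R : realType.

Record circ := Circ { cre : R; cim : R; circ_ax : cre ^+ 2 + cim ^+ 2 == 1 }.

Lemma circ_mul_ax (a b : circ) :
  (cre a * cre b - cim a * cim b) ^+ 2 + (cre a * cim b + cim a * cre b) ^+ 2 == 1.
Proof.
case: a b => x y /eqP hxy [] u v /eqP huv /=.
have -> : (x * u - y * v) ^+ 2 + (x * v + y * u) ^+ 2
          = (x ^+ 2 + y ^+ 2) * (u ^+ 2 + v ^+ 2) by ring.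
by rewrite hxy huv mulr1.
Qed.
Definition circ_mul (a b : circ) : circ := Circ (circ_mul_ax a b).

Lemma circ_inv_ax (a : circ) : cre a ^+ 2 + (- cim a) ^+ 2 == 1.
Proof. by rewrite sqrrN; exact: circ_ax. Qed.
Definition circ_inv (a : circ) : circ := Circ (circ_inv_ax a).

Lemma circ_one_ax : (1 : R) ^+ 2 + (0 : R) ^+ 2 == 1.
Proof. by rewrite expr1n expr0n addr0. Qed.
Definition circ_one : circ := Circ circ_one_ax.

Lemma circ_exp_ax (s : R) : cos s ^+ 2 + sin s ^+ 2 == 1.
Proof. by rewrite cos2Dsin2. Qed.
(* the one-parameter subgroup s |-> e^{is} (unit speed for the standard metric) *)
Definition circ_exp (s : R) : circ := Circ (circ_exp_ax s).
End Circle.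

(* PQR  : (R,+)
   PQT  : (e^{iR}, .)
   PQZ  : (Z,+)
   PQZn n : (e^{2 pi i Z/n}, .), realised by the isomorphic group Z/nZ = 'I_n
            (n >= 1 intended; for n = 0 one gets the trivial group). *)
Inductive pq := PQR | PQT | PQZ | PQZn of nat.

Definition car (R : realType) (q : pq) : Type :=
  match q with
  | PQR => R
  | PQT => circ R
  | PQZ => int
  | PQZn n => 'I_(n.-1).+1
  end.

Definition mulq (R : realType) (q : pq) : car R q -> car R q -> car R q :=
  match q return car R q -> car R q -> car R q with
  | PQR => fun x y => x + y
  | PQT => @circ_mul R
  | PQZ => fun x y => (x + y)%R
  | PQZn n => fun x y => (x + y)%R
  end.

Definition invq (R : realType) (q : pq) : car R q -> car R q :=
  match q return car R q -> car R q with
  | PQR => fun x => - x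
  | PQT => @circ_inv R
  | PQZ => fun x => (- x)%R
  | PQZn n => fun x => (- x)%R
  end.

Definition oneq (R : realType) (q : pq) : car R q :=
  match q return car R q with
  | PQR => 0
  | PQT => circ_one R
  | PQZ => 0%R
  | PQZn n => 0%R
  end.

(* continuous (one-dimensional) quantities vs. discrete (zero-dimensional) ones *)
Definition contq (q : pq) : bool :=
  match q with PQR | PQT => true | _ => false end.

(* moving a point by s along the unit-speed one-parameter subgroup of a
   continuous quantity (orthonormal direction of the standard Riemannian
   structure); discrete quantities do not move *)
Definition moveq (R : realType) (q : pq) : car R q -> R -> car R q :=
  match q return car R q -> R -> car R q with
  | PQR => fun x s => x + s
  | PQT => fun x s => circ_mul x (circ_exp s)
  | PQZ => fun x _ => x
  | PQZn n => fun x _ => x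
  end.

(* Indices j : 'I_M' stand for the groups N_2, ..., N_M (j <-> j+2),
   so M = M'+1.  N_j = G_j^1 x ... x G_j^{K_j}, all copies of quantity q j. *)
Section Groups.
Variables (R : realType) (M' : nat) (q : 'I_M' -> pq) (K : 'I_M' -> nat).

Definition Ngrp (j : 'I_M') := 'I_(K j) -> car R (q j).
Definition mulN (j : 'I_M') (x y : Ngrp j) : Ngrp j := fun k => mulq (x k) (y k).
Definition invN (j : 'I_M') (x : Ngrp j) : Ngrp j := fun k => invq (x k).
Definition oneN (j : 'I_M') : Ngrp j := fun k => oneq R (q j).

(* points h_1 = (g_2, ..., g_M) of H_1; equivalently points (y_m, g_m) of
   Y_m x N_m (after reordering the factors) *)
Definition Hpt := forall j : 'I_M', Ngrp j.
Definition Hone : Hpt := fun j => @oneN j.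

(* an action family: A j h acts on N_j, depending on h_j = (g_{j+1},...,g_M) *)
Definition actions := forall j : 'I_M', Hpt -> Ngrp j -> Ngrp j.

Definition hmul (A : actions) (h h' : Hpt) : Hpt :=
  fun j => mulN (h j) (A j h (h' j)).

Definition is_action_family (A : actions) : Prop :=
  [/\ (forall (j : 'I_M') (h h' : Hpt),
         (forall i : 'I_M', (j < i)%N -> h i = h' i) -> A j h = A j h'),
      (forall (j : 'I_M') (h : Hpt) (x y : Ngrp j),
         A j h (mulN x y) = mulN (A j h x) (A j h y)),
      (forall (j : 'I_M') (h : Hpt), bijective (A j h)),
      (forall (j : 'I_M') (h h' : Hpt), A j (hmul A h h') =1 A j h \o A j h') &
      (forall j : 'I_M', (q j = PQT \/ exists n, q j = PQZn n) ->
         forall (h : Hpt) (x : Ngrp j), A j h x = x)].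

Definition updH (h : Hpt) (j : 'I_M') (x : Ngrp j) : Hpt :=
  @dfwith _ (fun i : 'I_M' => Ngrp i) h j x.

Definition embed (j : 'I_M') (x : Ngrp j) : Hpt := updH Hone x.

Definition Dres (N : nat) (D : Hpt -> 'M[R]_N) (j : 'I_M') (x : Ngrp j) : 'M[R]_N :=
  D (embed x).

Definition is_representation (N : nat) (A : actions) (D : Hpt -> 'M[R]_N) : Prop :=
  [/\ (forall h : Hpt, D h \in unitmx),
      (forall h h' : Hpt, D (hmul A h h') = D h *m D h') &
      (forall h : Hpt, D h = \big[mulmx/1%:M]_(j < M') Dres D (h j))].

(* C_m(y_m, g_m) = omega_m D^m(y_m) D_m(g_m^{-1}), D^m in increasing order of j *)
Definition Cmap (N : nat) (D : Hpt -> 'M[R]_N) (m : 'I_M') (om : 'rV[R]_N)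
  (h : Hpt) : 'rV[R]_N :=
  om *m (\big[mulmx/1%:M]_(j < M' | j != m) Dres D (h j)) *m Dres D (invN (h m)).

Definition coord := {j : 'I_M' & 'I_(K j)}.
Definition ccoord : {pred coord} := [pred x : coord | contq (q (tag x))].
Definition cdim := #|ccoord|.

(* move every continuous coordinate of h by the corresponding entry of s
   (orthonormal coordinates around h) *)
Definition movept (h : Hpt) (s : 'rV[R]_cdim) : Hpt :=
  fun j k => moveq (h j k)
    (\sum_(i < cdim) (if enum_val i == Tagged (fun j => 'I_(K j)) k then s 0 i else 0)).

Definition chartmap (N : nat) (F : Hpt -> 'rV[R]_N) (h : Hpt) :
  'rV[R]_cdim -> 'rV[R]_N := fun s => F (movept h s).

(* rows = partial derivatives along the orthonormal directions *)
Definition jacraw (N : nat) (F : Hpt -> 'rV[R]_N) (h : Hpt) : 'M[R]_(cdim, N) :=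
  lin1_mx ('d (chartmap F h) 0).

Definition jac (N : nat) (e : cdim = N) (F : Hpt -> 'rV[R]_N) (h : Hpt) : 'M[R]_N :=
  castmx (e, erefl N) (jacraw F h).

(* F is a diffeomorphism onto U (smoothness rendered as differentiability) *)
Definition is_diffeo_onto (N : nat) (e : cdim = N) (F : Hpt -> 'rV[R]_N)
  (U : set 'rV[R]_N) : Prop :=
  [/\ injective F, range F = U,
      (forall h, differentiable (chartmap F h) 0) &
      (forall h, \det (jac e F h) != 0)].
End Groups.

(** Replacing the [m]-th component [g] of a point by [g'^-1 g] turns
    [D_m(g^-1)] into [D_m(g^-1) D_m(g')], so it multiplies [C_m] on the right
    by the constant matrix [D_m(g')].  The orthonormal coordinates of every
    physical quantity are right translations, hence commute with the left
    translation by [g'^-1]: the charts at the two points are intertwined by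
    the same right multiplication, and the chain rule multiplies the Jacobian
    on the right by [D_m(g')]. *)

From HB Require Import structures.
From mathcomp Require Import all_boot all_order all_algebra.
From mathcomp Require Import all_classical all_reals all_analysis.
From mathcomp Require Import ring.
Import Order.TTheory GRing.Theory Num.Theory.
Import numFieldNormedType.Exports.
Local Open Scope classical_set_scope.
Local Open Scope ring_scope.

Set Implicit Arguments.
Unset Strict Implicit.
Unset Printing Implicit Defensive.

Lemma circ_eq (R : realType) (a b : circ R) :
  cre a = cre b -> cim a = cim b -> a = b.
Proof.
case: a b => [x y p] [u v p'] /= ex ey; subst u v.
by rewrite (eq_irrelevance p p').
Qed.

Section PhysicalQuantity.
Variables (R : realType) (q : pq).

Lemma mulqA (a b c : car R q) : mulq a (mulq b c) = mulq (mulq a b) c.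
Proof.
case: q a b c => [a b c|a b c|a b c|n a b c] /=; rewrite ?addrA //.
by apply: circ_eq => /=; ring.
Qed.

Lemma mul1q (a : car R q) : mulq (oneq R q) a = a.
Proof.
case: q a => [a|a|a|n a] /=; rewrite ?add0r //.
by apply: circ_eq => /=; ring.
Qed.

Lemma mulVq (a : car R q) : mulq (invq a) a = oneq R q.
Proof.
case: q a => [a|a|a|n a] /=; rewrite ?addNr //.
apply: circ_eq => /=; last by ring.
by rewrite -(eqP (circ_ax a)); ring.
Qed.

Lemma mulq_idem (a : car R q) : mulq a a = a -> a = oneq R q.
Proof. by move=> aa; rewrite -(mulVq a) -{3}aa mulqA mulVq mul1q. Qed.

Lemma invqM (a b : car R q) : invq (mulq a b) = mulq (invq b) (invq a).
Proof.
case: q a b => [a b|a b|a b|n a b] /=; try by rewrite opprD addrC.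
by apply: circ_eq => /=; ring.
Qed.

Lemma invqK (a : car R q) : invq (invq a) = a.
Proof.
case: q a => [a|a|a|n a] /=; rewrite ?opprK //.
by apply: circ_eq => //=; rewrite opprK.
Qed.

End PhysicalQuantity.

Lemma moveq_mul (R : realType) (q : pq) (a b : car R q) (s : R) :
  moveq (mulq a b) s = mulq a (moveq b s).
Proof.
case: q a b => [a b|a b|a b|n a b] //=; first by rewrite addrA.
exact/esym/(mulqA a b (circ_exp s)).
Qed.

Section SemidirectProduct.
Variables (R : realType) (M' : nat) (q : 'I_M' -> pq) (K : 'I_M' -> nat).
Local Notation Hpt := (Hpt R q K).
Local Notation Ngrp := (Ngrp R q K).
Local Notation oneN := (@oneN R M' q K _).
Local Notation Hone := (@Hone R M' q K).

Lemma updH_in (h : Hpt) j (x : Ngrp j) : @updH R M' q K h j x j = x.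
Proof. exact: dfwith_in. Qed.

Lemma updH_out (h : Hpt) j (x : Ngrp j) i :
  j != i -> @updH R M' q K h j x i = h i.
Proof. exact: dfwith_out. Qed.

Lemma mul1N j (x : Ngrp j) : mulN oneN x = x.
Proof. by apply: funext => k; rewrite /mulN mul1q. Qed.

Lemma invNM j (x y : Ngrp j) : invN (mulN x y) = mulN (invN y) (invN x).
Proof. by apply: funext => k; rewrite /invN /mulN invqM. Qed.

Lemma invNK j (x : Ngrp j) : invN (invN x) = x.
Proof. by apply: funext => k; rewrite /invN invqK. Qed.

Variable A : actions R q K.
Arguments A : clear implicits.
Hypothesis actionA : is_action_family A.

Lemma act1N (j : 'I_M') (h : Hpt) : A j h oneN = oneN.
Proof.
have [_ actM _ _ _] := actionA.
have idem := actM j h oneN oneN; rewrite mul1N in idem.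
apply: funext => k; apply: mulq_idem.
exact: (congr1 (fun f => f k) (esym idem)).
Qed.

Lemma hmul1 : hmul A Hone Hone = Hone.
Proof.
by apply: functional_extensionality_dep => j; rewrite /hmul act1N mul1N.
Qed.

Lemma act_Hone (j : 'I_M') (x : Ngrp j) : A j Hone x = x.
Proof.
have [_ _ bijA compA _] := actionA.
apply: (bij_inj (bijA j Hone)).
by have := compA j Hone Hone x; rewrite hmul1 => /= <-.
Qed.

(** [A_m(h)] only depends on the components of [h] beyond [m], which are
    trivial for [h] in [N_m]. *)
Lemma act_embed m (x y : Ngrp m) : A m (embed x) y = y.
Proof.
have [localA _ _ _ _] := actionA.
rewrite (localA m (embed x) Hone) ?act_Hone // => i mi.
by rewrite /embed updH_out // neq_ltn mi.
Qed.

Lemma embedM m (x y : Ngrp m) : embed (mulN x y) = hmul A (embed x) (embed y).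
Proof.
apply: functional_extensionality_dep => i; rewrite /hmul.
have [<-|mi] := eqVneq m i.
  by rewrite /embed !updH_in -/(embed x) act_embed.
by rewrite /embed !updH_out // act1N mul1N.
Qed.

Variables (N : nat) (D : Hpt -> 'M[R]_N).
Hypothesis reprD : is_representation A D.

Lemma DresM m (x y : Ngrp m) : Dres D (mulN x y) = Dres D x *m Dres D y.
Proof. by have [_ DM _] := reprD; rewrite /Dres embedM DM. Qed.

End SemidirectProduct.

Section Translation.
Variables (R : realType) (M' : nat) (q : 'I_M' -> pq) (K : 'I_M' -> nat).
Variable A : actions R q K.
Hypothesis actionA : is_action_family A.
Variables (N : nat) (D : Hpt R q K -> 'M[R]_N).
Hypothesis reprD : is_representation A D.

Lemma Dres_invN_translate m (g x : Ngrp R q K m) :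
  Dres D (invN (mulN (invN g) x)) = Dres D (invN x) *m Dres D g.
Proof. by rewrite invNM invNK (DresM actionA reprD). Qed.

Lemma Cmap_translate m om (h : Hpt R q K) (g : Ngrp R q K m) :
  Cmap D m om (updH h (mulN (invN g) (h m))) = Cmap D m om h *m Dres D g.
Proof.
rewrite /Cmap updH_in Dres_invN_translate mulmxA; congr (om *m _ *m _ *m _).
by apply: eq_bigr => j mj; rewrite updH_out // eq_sym.
Qed.

Lemma movept_translate m (h : Hpt R q K) (g : Ngrp R q K m) s :
  movept (updH h (mulN g (h m))) s
  = updH (movept h s) (mulN g (@movept R M' q K h s m)).
Proof.
apply: functional_extensionality_dep => j.
have [<-|mj] := eqVneq m j; last by rewrite /movept !updH_out.
by apply: funext => k; rewrite /movept !updH_in /mulN moveq_mul.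
Qed.

Lemma chartmap_translate m om (h : Hpt R q K) (g : Ngrp R q K m) :
  chartmap (Cmap D m om) (updH h (mulN (invN g) (h m)))
  = fun s => chartmap (Cmap D m om) h s *m Dres D g.
Proof.
by apply: funext => s; rewrite /chartmap movept_translate Cmap_translate.
Qed.

End Translation.

Lemma mulmxr_continuous (R : numFieldType) n p (B : 'M[R]_(n, p)) :
  continuous (mulmxr B : 'rV[R]_n -> 'rV[R]_p).
Proof.
have -> : mulmxr B = fun v => \sum_(k < n) v 0 k *: row k B.
  by apply: funext => v; rewrite /= mulmx_sum_row.
apply: continuous_big => [|k _ v]; first exact: add_continuous.
exact/continuousZr_tmp/coord_continuous.
Qed.

Lemma lin1_mx_mulmxr (R : pzRingType) n p k (f : 'rV[R]_n -> 'rV[R]_p)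
    (B : 'M[R]_(p, k)) :
  lin1_mx (mulmxr B \o f) = lin1_mx f *m B.
Proof.
by apply/matrixP => i j; rewrite !mxE; apply: eq_bigr => l _; rewrite mxE.
Qed.

Lemma jacobian_mulmxr (R : numFieldType) n p k (f : 'rV[R]_n -> 'rV[R]_p)
    (B : 'M[R]_(p, k)) x :
  differentiable f x -> jacobian (fun y => f y *m B) x = jacobian f x *m B.
Proof.
move=> df; rewrite -lin1_mx_mulmxr /jacobian.
have -> : (fun y => f y *m B) = mulmxr B \o f by [].
rewrite diff_comp ?diff_lin //; first exact: mulmxr_continuous.
exact/linear_differentiable/mulmxr_continuous.
Qed.

Lemma castmx_mulmxr (R : pzRingType) n p (e : n = p) (X : 'M[R]_(n, p))
    (B : 'M[R]_p) :
  castmx (e, erefl p) (X *m B) = castmx (e, erefl p) X *m B.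
Proof. by case: p / e X B => X B; rewrite !castmx_id. Qed.

Lemma normr_det_castmx_jacobian_mulmxr (R : numFieldType) n p (e : n = p)
    (f : 'rV[R]_n -> 'rV[R]_p) (B : 'M[R]_p) x :
  differentiable f x ->
  `|\det (castmx (e, erefl p) (jacobian (fun y => f y *m B) x))|
  = `|\det B| * `|\det (castmx (e, erefl p) (jacobian f x))|.
Proof.
by move=> df; rewrite jacobian_mulmxr // castmx_mulmxr det_mulmx normrM mulrC.
Qed.

Theorem lemma2 (R : realType) (N M' : nat) (q : 'I_M' -> pq) (K : 'I_M' -> nat)
  (A : actions R q K) (D : Hpt R q K -> 'M[R]_N)
  (om0 : 'rV[R]_N) (U : set 'rV[R]_N) (om : 'I_M' -> 'rV[R]_N)
  (e : cdim q K = N) :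
  is_action_family A ->
  is_representation A D ->
  U = [set om0 *m D h | h in [set: Hpt R q K]] ->
  open U -> dense U ->
  (forall m : 'I_M', is_diffeo_onto e (Cmap D m (om m)) U) ->
  forall (m : 'I_M') (h : Hpt R q K) (g' : Ngrp R q K m),
    `| \det (jac e (Cmap D m (om m)) (updH h (mulN (invN g') (h m)))) |
    = `| \det (Dres D g') | * `| \det (jac e (Cmap D m (om m)) h) |.
Proof.
move=> actionA reprD _ _ _ diffeoC m h g'.
have [_ _ diffC _] := diffeoC m.
rewrite /jac /jacraw (chartmap_translate actionA reprD).
exact: normr_det_castmx_jacobian_mulmxr (diffC h).
Qed.
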